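(* Let $d\ge2$. Let $\Omega\subset\mathbb{R}^d_+$ be open and bounded and satisfy the cone condition: for every $x\in\partial\Omega$ there exist a cone $\mathcal{K}_x$ with nonempty interior and a neighborhood $V_x$ of $x$ such that $y\in V_x\setminus\Omega$ implies $(y+\mathcal{K}_x)\cap\overline{\Omega}\cap V_x\subset\{y\}$. Let $f:\mathbb{R}^d_+\to[0,\infty)$ satisfy: there is a continuous nondecreasing $m:[0,\infty)\to[0,\infty)$ with $m(0)=0$ and $|f(x)-f(y)|\le m(|x-y|)$ for $x,y\in\Omega$, and $f(x)=0$ for $x\notin\Omega$. Let $u,v:\overline{\mathbb{R}^d_+}\to\mathbb{R}$ be continuous, with $u$ a viscosity subsolution and $v$ a viscosity supersolution of \[u_{x_1}\cdots u_{x_d}=f\quad\text{on }\mathbb{R}^d_+,\] and assume $u$ is truncatable and $v$ is Pareto-monotone. If $u\le v$ on $\partial\mathbb{R}^d_+$, then $u\le v$ on $\mathbb{R}^d_+$.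
   Context: $\mathbb{R}^d_+=\{x:x_i>0\ \forall i\}$; $x\leqq y$ means $x_i\le y_i$ for all $i$. $v$ is Pareto-monotone if $x\leqq y$ implies $v(x)\le v(y)$. For bounded $g$, $g^*(x)=\limsup_{r\searrow0}\sup\{g(y):|y-x|\le r\}$ and $g_*=-(-g)^*$. Superdifferential $D^+u(x)$: all $p$ with $u(y)\le u(x)+\langle p,y-x\rangle+o(|y-x|)$ as $y\to x$; subdifferential $D^-u(x)$ with $\ge$. A continuous $u$ is a viscosity subsolution of $u_{x_1}\cdots u_{x_d}=g$ on $\mathbb{R}^d_+$ if $p_1\cdots p_d\le g^*(x)$ for all $x\in\mathbb{R}^d_+$, $p\in D^+u(x)$; a supersolution if $p_1\cdots p_d\ge g_*(x)$ for all $p\in D^-u(x)$. A viscosity subsolution $u$ of $u_{x_1}\cdots u_{x_d}=f$ is truncatable if for every $z\in\mathbb{R}^d_+$, the function $\tilde u(x)=u(\min(x_1,z_1),\dots,\min(x_d,z_d))$ is a viscosity subsolution of $\tilde u_{x_1}\cdots\tilde u_{x_d}=\hat f$ on $\mathbb{R}^d_+$, where $\hat f(x)=f^*(x)$ if $x\leqq z$ and $\hat f(x)=0$ otherwise. *)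

From HB Require Import structures.
From mathcomp Require Import all_boot all_order all_algebra.
From mathcomp Require Import boolp classical_sets reals.
Set Implicit Arguments. Unset Strict Implicit. Unset Printing Implicit Defensive.
Import Order.TTheory GRing.Theory Num.Theory.
Local Open Scope classical_set_scope.
Local Open Scope ring_scope.

Section Defs.
Variables (R : realType) (d : nat).
Definition vec := 'I_d -> R.

Definition enorm (x : vec) : R := Num.sqrt (\sum_(i < d) x i ^+ 2).
Definition vsub (x y : vec) : vec := fun i => x i - y i.
Definition vadd (x y : vec) : vec := fun i => x i + y i.
Definition vscale (t : R) (x : vec) : vec := fun i => t * x i.
Definition dot (p x : vec) : R := \sum_(i < d) p i * x i.
Definition dist (x y : vec) : R := enorm (vsub x y).

Definition posorth : set vec := [set x | forall i, 0 < x i].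
Definition cposorth : set vec := [set x | forall i, 0 <= x i].
Definition bdposorth : set vec := [set x | cposorth x /\ exists i, x i = 0].

Definition vle (x y : vec) : Prop := forall i, x i <= y i.

Definition vmin (x z : vec) : vec := fun i => Num.min (x i) (z i).

Definition ball_ (x : vec) (r : R) : set vec := [set y | dist y x < r].
Definition is_open (A : set vec) : Prop :=
  forall x, A x -> exists2 r : R, 0 < r & ball_ x r `<=` A.
Definition is_bounded (A : set vec) : Prop :=
  exists M : R, forall x, A x -> enorm x <= M.
Definition clos (A : set vec) : set vec :=
  [set x | forall r : R, 0 < r -> exists y, A y /\ dist y x < r].
Definition bdry (A : set vec) : set vec := clos A `\` A.
Definition is_nbhd (x : vec) (V : set vec) : Prop :=
  exists2 r : R, 0 < r & ball_ x r `<=` V.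
Definition interior_ (A : set vec) : set vec := [set x | is_nbhd x A].

Definition is_cone (K : set vec) : Prop :=
  forall k t, K k -> 0 <= t -> K (vscale t k).

Definition cone_condition (Om : set vec) : Prop :=
  forall x, bdry Om x ->
    exists K V, [/\ is_cone K, interior_ K !=set0, is_nbhd x V &
      forall y, V y -> ~ Om y ->
        forall w, (exists k, K k /\ w = vadd y k) -> clos Om w -> V w -> w = y].

(* upper semicontinuous envelope g^*(x) = limsup_{r -> 0+} sup_{|y-x|<=r} g(y)
   (for bounded g, the sup being nondecreasing in r, this is the infimum over r > 0);
   y ranges over the domain R^d_+ of g. *)
Definition usc_env (g : vec -> R) (x : vec) : R :=
  inf [set sup [set g y | y in [set y | posorth y /\ dist y x <= r]] | r in [set r : R | 0 < r]].
Definition lsc_env (g : vec -> R) (x : vec) : R :=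
  - usc_env (fun y => - g y) x.

Definition superdiff (u : vec -> R) (x p : vec) : Prop :=
  forall eps : R, 0 < eps -> exists2 del : R, 0 < del &
    forall y, posorth y -> dist y x < del ->
      u y <= u x + dot p (vsub y x) + eps * dist y x.
Definition subdiff (u : vec -> R) (x p : vec) : Prop :=
  forall eps : R, 0 < eps -> exists2 del : R, 0 < del &
    forall y, posorth y -> dist y x < del ->
      u y >= u x + dot p (vsub y x) - eps * dist y x.

Definition visc_sub (g u : vec -> R) : Prop :=
  forall x p, posorth x -> superdiff u x p -> \prod_(i < d) p i <= usc_env g x.
Definition visc_super (g v : vec -> R) : Prop :=
  forall x p, posorth x -> subdiff v x p -> \prod_(i < d) p i >= lsc_env g x.

Definition cont_on (A : set vec) (u : vec -> R) : Prop :=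
  forall x, A x -> forall eps : R, 0 < eps -> exists2 del : R, 0 < del &
    forall y, A y -> dist y x < del -> `|u y - u x| < eps.

Definition pareto_monotone (v : vec -> R) : Prop :=
  forall x y, cposorth x -> cposorth y -> vle x y -> v x <= v y.

Definition fhat (f : vec -> R) (z : vec) (x : vec) : R :=
  if `[< vle x z >] then usc_env f x else 0.

Definition truncatable (f u : vec -> R) : Prop :=
  forall z, posorth z -> visc_sub (fhat f z) (fun x => u (vmin x z)).

End Defs.

Definition is_modulus (R : realType) (m : R -> R) : Prop :=
  [/\ m 0 = 0,
      (forall r, 0 <= r -> 0 <= m r),
      (forall r s, 0 <= r -> r <= s -> m r <= m s) &
      (forall r, 0 <= r -> forall eps : R, 0 < eps -> exists2 del : R, 0 < del &
         forall s, 0 <= s -> `|s - r| < del -> `|m s - m r| < eps)].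

From HB Require Import structures.
From mathcomp Require Import all_boot all_order all_algebra.
From mathcomp Require Import boolp classical_sets reals topology normedtype derive.
From mathcomp Require Import ring lra.
Import Order.TTheory GRing.Theory Num.Theory.
Import numFieldNormedType.Exports.
Local Open Scope classical_set_scope.
Local Open Scope ring_scope.
Set Implicit Arguments. Unset Strict Implicit. Unset Printing Implicit Defensive.

(* Suppose u > v somewhere.  Truncate u at a large z and subtract ep * sum x_i from
   the difference: its maximum over the box [0, z] is then a global maximum on the
   closed orthant, attained at an interior point xh because u <= v on the boundary
   and v is Pareto-monotone.  Doubling the variables with the penalty
   |x - y - al k|^2 / al^2 + |y - xh|^2, where k points into the cone given by the
   cone condition at xh, yields p in the superdifferential of the truncated u at xa
   and p - ep - 2 (ya - xh) in the subdifferential of v at ya.  The latter is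
   nonnegative by monotonicity of v, so the two products differ by at least
   (ep/2)^d.  Yet the equations bound them by fhat^*(xa) and f_*(ya), which nearly
   agree: if ya is in Omega by the modulus of continuity of f, and otherwise because
   xa ~ ya + al k then lies in the exterior of Omega, where fhat vanishes. *)

Lemma min_le_l (R : realType) (a b : R) : Num.min a b <= a.
Proof. by rewrite ge_min lexx. Qed.

Lemma min_le_r (R : realType) (a b : R) : Num.min a b <= b.
Proof. by rewrite ge_min lexx orbT. Qed.

Section Euclid.
Variables (R : realType) (n : nat).
Implicit Types (x y a h : vec R n).

Definition sqnorm x : R := \sum_(i < n) x i ^+ 2.

Lemma sqnorm_ge0 x : 0 <= sqnorm x.
Proof. by apply: sumr_ge0 => i _; rewrite sqr_ge0. Qed.

Lemma sqnorm_ext x y : (forall i, x i = y i) -> sqnorm x = sqnorm y.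
Proof. by move=> e; apply: eq_bigr => i _; rewrite e. Qed.

Lemma enormE x : enorm x = Num.sqrt (sqnorm x).
Proof. by []. Qed.

Lemma enorm_ge0 x : 0 <= enorm x.
Proof. exact: sqrtr_ge0. Qed.

Lemma enorm_sqr x : enorm x ^+ 2 = sqnorm x.
Proof. by rewrite enormE sqr_sqrtr // sqnorm_ge0. Qed.

Lemma enorm_ext x y : (forall i, x i = y i) -> enorm x = enorm y.
Proof. by move=> e; rewrite !enormE (sqnorm_ext e). Qed.

Lemma coord_sqr_le_sqnorm x i : x i ^+ 2 <= sqnorm x.
Proof.
rewrite /sqnorm (bigD1 i) //= lerDl; apply: sumr_ge0 => j _; exact: sqr_ge0.
Qed.

Lemma le_sqr_nonneg (a b : R) : 0 <= b -> a ^+ 2 <= b ^+ 2 -> `|a| <= b.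
Proof.
move=> b0 H; rewrite -(ger0_norm b0); rewrite -ler_sqr ?nnegrE //.
by rewrite -!normrX !ger0_norm ?sqr_ge0.
Qed.

Lemma coord_le_enorm x i : `|x i| <= enorm x.
Proof. by apply: le_sqr_nonneg; rewrite ?enorm_ge0 // enorm_sqr coord_sqr_le_sqnorm. Qed.

Lemma enorm_lt_sqnorm x (t : R) : 0 < t -> sqnorm x < t ^+ 2 -> enorm x < t.
Proof.
move=> t0 H; rewrite -(@ltr_pXn2r _ 2%N) ?nnegrE ?enorm_ge0 ?ltW //.
by rewrite enorm_sqr.
Qed.

Lemma enorm_le_sqnorm x (t : R) : 0 <= t -> sqnorm x <= t ^+ 2 -> enorm x <= t.
Proof.
move=> t0 H; rewrite -(@ler_pXn2r _ 2%N) ?nnegrE ?enorm_ge0 //.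
by rewrite enorm_sqr.
Qed.

Lemma cauchy_schwarz x y : dot x y ^+ 2 <= sqnorm x * sqnorm y.
Proof.
set A := sqnorm x; set B := dot x y; set C := sqnorm y.
have C0 : 0 <= C by apply: sqnorm_ge0.
have key : 0 <= C * (A * C - B ^+ 2).
  have -> : C * (A * C - B ^+ 2) = \sum_(i < n) (C * x i - B * y i) ^+ 2.
    have -> : \sum_(i < n) (C * x i - B * y i) ^+ 2 =
       \sum_(i < n) (C ^+ 2 * x i ^+ 2 - (2 * C * B) * (x i * y i) + B ^+ 2 * y i ^+ 2).
      by apply: eq_bigr => i _; ring.
    rewrite big_split /= sumrB -!mulr_sumr /A /C /B /dot /sqnorm; ring.
  by apply: sumr_ge0 => i _; apply: sqr_ge0.
have [C00|Cpos] := eqVneq C 0.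
  have y0 : forall i, y i = 0.
    move=> i; apply/eqP; rewrite -sqrf_eq0 eq_le sqr_ge0 andbT.
    by rewrite -C00 coord_sqr_le_sqnorm.
  have -> : B = 0 by rewrite /B /dot big1 // => i _; rewrite y0 mulr0.
  by rewrite expr0n /= mulr_ge0 // sqnorm_ge0.
have Cp : 0 < C by rewrite lt_def Cpos C0.
by rewrite pmulr_rge0 // subr_ge0 in key.
Qed.

Lemma dot_le_enorm x y : dot x y <= enorm x * enorm y.
Proof.
have := cauchy_schwarz x y; rewrite -!enorm_sqr -exprMn => H.
apply: le_trans (ler_norm _) _; apply: le_sqr_nonneg => //.
by rewrite mulr_ge0 ?enorm_ge0.
Qed.

Lemma dot_abs_le (c x : vec R n) : `|dot c x| <= enorm c * enorm x.
Proof.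
rewrite ler_norml; apply/andP; split; last exact: dot_le_enorm.
have := dot_le_enorm (fun i => - c i) x.
have -> : dot (fun i => - c i) x = - dot c x.
  by rewrite /dot -sumrN; apply: eq_bigr => i _; ring.
have -> : enorm (fun i => - c i) = enorm c.
  by rewrite !enormE /sqnorm; congr Num.sqrt; apply: eq_bigr => i _; ring.
lra.
Qed.

Lemma dot_sub (c x y : vec R n) : dot c x - dot c y = dot c (vsub x y).
Proof. by rewrite /dot -sumrB; apply: eq_bigr => i _; rewrite /vsub; ring. Qed.

Lemma dot_lin (a b h : vec R n) (c1 c2 c3 : R) :
  dot (fun i => c1 * a i - c2 - c3 * b i) h =
  c1 * dot a h - c2 * \sum_(i < n) h i - c3 * dot b h.
Proof.
rewrite /dot !mulr_sumr -!sumrB; apply: eq_bigr => i _; ring.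
Qed.

Lemma sqnorm_add x y : sqnorm (vadd x y) = sqnorm x + 2 * dot x y + sqnorm y.
Proof.
rewrite /sqnorm /vadd /dot mulr_sumr -!big_split /=; apply: eq_bigr => i _; ring.
Qed.

Lemma sqnorm_sub a h : sqnorm (vsub a h) = sqnorm a - 2 * dot a h + sqnorm h.
Proof.
rewrite /sqnorm /vsub /dot mulr_sumr -sumrB -big_split /=; apply: eq_bigr => i _; ring.
Qed.

Lemma enorm_triangle x y : enorm (vadd x y) <= enorm x + enorm y.
Proof.
apply: enorm_le_sqnorm; first by rewrite addr_ge0 ?enorm_ge0.
rewrite sqnorm_add -!enorm_sqr; have := dot_le_enorm x y.
rewrite sqrrD; nra.
Qed.

Lemma sqnorm_le_sqr_sum_abs x : sqnorm x <= (\sum_(i < n) `|x i|) ^+ 2.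
Proof.
rewrite /sqnorm; elim: (index_enum _) => [|j s IH]; first by rewrite !big_nil expr0n.
rewrite !big_cons; have H0 : 0 <= \sum_(i <- s) `|x i| by apply: sumr_ge0.
have := normr_ge0 (x j); have : x j ^+ 2 = `|x j| ^+ 2 by rewrite real_normK ?num_real.
move=> ->; nra.
Qed.

Lemma enorm_le_sum_abs x : enorm x <= \sum_(i < n) `|x i|.
Proof. by apply: enorm_le_sqnorm; [apply: sumr_ge0 | apply: sqnorm_le_sqr_sum_abs]. Qed.

Lemma enorm_scale (t : R) x : enorm (vscale t x) = `|t| * enorm x.
Proof.
rewrite !enormE -(sqrtr_sqr t) -sqrtrM ?sqr_ge0 //; congr Num.sqrt.
by rewrite /sqnorm mulr_sumr; apply: eq_bigr => i _; rewrite /vscale; ring.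
Qed.

Lemma sqnorm_zero x : (forall i, x i = 0) -> sqnorm x = 0.
Proof. by move=> H; rewrite /sqnorm big1 // => i _; rewrite H expr0n. Qed.

Lemma dist_ge0 x y : 0 <= dist x y.
Proof. exact: enorm_ge0. Qed.

Lemma dist_sym x y : dist x y = dist y x.
Proof.
by rewrite /dist !enormE /sqnorm; congr Num.sqrt; apply: eq_bigr => i _; rewrite /vsub; ring.
Qed.

Lemma enorm_dist_le a b : `|enorm a - enorm b| <= dist a b.
Proof.
have h1 : enorm a <= enorm b + dist a b.
  have -> : enorm a = enorm (vadd b (vsub a b)).
    by apply: enorm_ext => i; rewrite /vadd /vsub; ring.
  exact: enorm_triangle.
have h2 : enorm b <= enorm a + dist a b.
  have -> : enorm b = enorm (vadd a (vsub b a)).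
    by apply: enorm_ext => i; rewrite /vadd /vsub; ring.
  rewrite (dist_sym a b); exact: enorm_triangle.
rewrite ler_norml; apply/andP; split; lra.
Qed.

Lemma dist_triangle x y z : dist x z <= dist x y + dist y z.
Proof.
rewrite /dist; have -> : enorm (vsub x z) = enorm (vadd (vsub x y) (vsub y z)).
  by apply: enorm_ext => i; rewrite /vadd /vsub; ring.
exact: enorm_triangle.
Qed.

Lemma coord_le_dist x y i : `|x i - y i| <= dist x y.
Proof. exact: (coord_le_enorm (vsub x y) i). Qed.

Lemma dist_self x : dist x x = 0.
Proof.
by rewrite /dist enormE /sqnorm big1 ?sqrtr0 // => i _; rewrite /vsub subrr expr0n.
Qed.

Lemma dist_sqr x y : dist x y ^+ 2 = sqnorm (vsub x y).
Proof. exact: enorm_sqr. Qed.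

Lemma dist_le_norms x y : dist x y <= enorm x + enorm y.
Proof.
have -> : dist x y = enorm (vadd x (fun i => - y i)).
  by apply: enorm_ext => i; rewrite /vadd /vsub.
apply: le_trans (enorm_triangle _ _) _.
have -> : enorm (fun i => - y i) = enorm y.
  by rewrite !enormE /sqnorm; congr Num.sqrt; apply: eq_bigr => i _; ring.
by [].
Qed.

Lemma dist_eq0 x y : dist x y = 0 -> forall i, x i = y i.
Proof.
move=> H i; have := coord_le_dist x y i; rewrite H => h.
by apply/eqP; rewrite -subr_eq0 -normr_eq0 eq_le h normr_ge0.
Qed.

Lemma dist_vmin x y z : dist (vmin x z) (vmin y z) <= dist x y.
Proof.
rewrite /dist !enormE ler_sqrt ?sqnorm_ge0 //; apply: ler_sum => i _.
rewrite /vsub /vmin /=.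
case: (leP (x i) (z i)) => h1; case: (leP (y i) (z i)) => h2; try nra.
by rewrite subrr expr0n /= sqr_ge0.
Qed.

Lemma abs_coord_le_sum x i : `|x i| <= \sum_(j < n) `|x j|.
Proof. by rewrite (bigD1 i) //= lerDl; apply: sumr_ge0. Qed.

Lemma sum_single (F : 'I_n -> R) i : (forall j, j != i -> F j = 0) -> \sum_(j < n) F j = F i.
Proof. by move=> H; rewrite (bigD1 i) //= big1 ?addr0 // => j /H. Qed.

Lemma posorth_coord_lb x : posorth x -> exists2 l : R, 0 < l & forall i, l <= x i.
Proof.
move=> px.
suff [l l0 H] : exists2 l : R, 0 < l & forall i, i \in index_enum 'I_n -> l <= x i.
  by exists l => // i; apply: H; rewrite mem_index_enum.
elim: (index_enum _) => [|j s [l l0 H]]; first by exists 1.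
exists (Num.min l (x j)); first by rewrite lt_min l0 px.
move=> i; rewrite in_cons => /orP[/eqP ->|/H h]; rewrite ge_min ?lexx ?orbT //.
by rewrite h.
Qed.

Lemma posorth_ball x (l : R) y : (forall i, l <= x i) -> dist y x < l -> posorth y.
Proof.
move=> H dy i; have := coord_le_dist y x i; have := H i.
rewrite ler_norml => h /andP[h1 h2]; lra.
Qed.

Lemma not_clos_dist (A : set (vec R n)) x : ~ clos A x ->
  exists2 r : R, 0 < r & forall y, A y -> r <= dist y x.
Proof.
move=> nc; apply: contra_notP nc => H r r0.
apply: contra_notP H => H; exists r => // y Ay; rewrite leNgt; apply/negP => dy.
by apply: H; exists y.
Qed.

Definition box (Z : R) : set (vec R n) :=
  [set x | forall i, 0 <= x i <= Z].

Lemma box_cposorth (Z : R) x : box Z x -> cposorth x.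
Proof. by move=> bx i; have /andP[] := bx i. Qed.

Lemma clos_sub_box (Z : R) (S : set (vec R n)) x :
  S `<=` box Z -> clos S x -> box Z x.
Proof.
move=> SB cl i; apply/andP; split.
- rewrite -oppr_le0; apply/ler_addgt0Pr => r r0.
  have [y [Sy dy]] := cl r r0; have := coord_le_dist y x i.
  have /andP[h1 h2] := SB y Sy i; rewrite ler_norml => /andP[a b]; lra.
- apply/ler_addgt0Pr => r r0.
  have [y [Sy dy]] := cl r r0; have := coord_le_dist y x i.
  have /andP[h1 h2] := SB y Sy i; rewrite ler_norml => /andP[a b]; lra.
Qed.

End Euclid.

Lemma mx_entry_le_norm (R : realType) n (M : 'rV[R]_n) i : `|M ord0 i| <= `|M|.
Proof.
rewrite [leRHS]/Num.norm /= mx_normrE; apply/bigmax_geP; right => /=.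
by exists (ord0, i).
Qed.

(* Compactness is available for row vectors; [vec_of_row] transports it to [vec R n]. *)
Section ExtremeValue.
Variables (R : realType) (n : nat).

Definition vec_of_row (r : 'rV[R]_n) : vec R n := fun i => r ord0 i.

Lemma dist_vec_of_row (q r : 'rV[R]_n) : dist (vec_of_row q) (vec_of_row r) <= n%:R * `|q - r|.
Proof.
apply: le_trans (enorm_le_sum_abs _) _.
have -> : n%:R * `|q - r| = \sum_(i < n) `|q - r|.
  by rewrite sumr_const card_ord mulr_natl.
apply: ler_sum => i _.
by rewrite /vsub /vec_of_row; have := mx_entry_le_norm (q - r) i; rewrite !mxE.
Qed.

Lemma vec_of_row_near (r : 'rV[R]_n) (eps : R) : 0 < eps ->
  exists2 e : R, 0 < e & forall q, ball r e q -> dist (vec_of_row q) (vec_of_row r) < eps.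
Proof.
move=> e0; exists (eps / (n%:R + 1)).
  by rewrite divr_gt0 // ltr_wpDl.
move=> q; rewrite -ball_normE /= => bq.
apply: le_lt_trans (dist_vec_of_row q r) _.
have n0 : 0 < n%:R + 1 :> R by rewrite ltr_wpDl.
rewrite distrC; apply: (@le_lt_trans _ _ (n%:R * (eps / (n%:R + 1)))).
  by rewrite ler_wpM2l // ltW.
rewrite mulrA ltr_pdivrMr // mulrDr mulr1 mulrC ltrDl //.
Qed.

Lemma cont_on_attains_max (S : set (vec R n)) (Z : R) (g : vec R n -> R) :
  S !=set0 -> (forall x, S x -> forall i, 0 <= x i <= Z) ->
  (forall x, clos S x -> S x) -> cont_on S g ->
  exists2 c, S c & forall x, S x -> g x <= g c.
Proof.
move=> [x0 Sx0] Sb Scl gc.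
pose ro (x : vec R n) : 'rV[R]_n := \row_i x i.
have voro x : vec_of_row (ro x) = x by apply/funext => i; rewrite /vec_of_row /ro mxE.
pose T := [set r : 'rV[R]_n | S (vec_of_row r)].
have clT : closed T.
  move=> r clr; apply: Scl => eps eps0.
  have [e e0 He] := vec_of_row_near r eps0.
  have nb : nbhs r (ball r e) by apply/nbhs_ballP; exists e.
  have [q [Tq bq]] := clr (ball r e) nb.
  by exists (vec_of_row q); split => //; apply: He.
have cT : compact T.
  have cB := (@rV_compact _ n (fun=> `[0, Z]%classic) (fun i => @segment_compact R 0 Z)).
  apply: (subclosed_compact clT cB).
  by move=> r /Sb H i /=; rewrite in_itv /=; apply: H.
have T0 : T !=set0 by exists (ro x0); rewrite /T /= voro.
have cf : {within T, continuous (g \o vec_of_row)}.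
  apply/subspace_continuousP => r Tr.
  apply/cvgrPdist_lt => e e0.
  rewrite /within; apply/nbhs_ballP.
  have [del del0 Hdel] := gc (vec_of_row r) Tr e e0.
  have [e' e'0 He'] := vec_of_row_near r del0.
  exists e' => // t /= bt Tt.
  by rewrite distrC; apply: Hdel => //; apply: He'.
have [c /set_mem Tc Hc] := compact_EVT_max T0 cT cf.
exists (vec_of_row c) => // x Sx.
have := Hc (ro x); rewrite /= voro; apply; apply: mem_set; by rewrite /T /= voro.
Qed.

Lemma cont_on_box_max (Z : R) (g : vec R n -> R) : 0 <= Z -> cont_on (box Z) g ->
  exists2 c, box Z c & forall x, box Z x -> g x <= g c.
Proof.
move=> Z0 gc; apply: (cont_on_attains_max (Z := Z)) => //.
- by exists (fun=> 0) => i; rewrite lexx.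
- by move=> x clx; apply: (@clos_sub_box _ _ Z (box Z)).
Qed.

End ExtremeValue.

Section Continuity.
Variable R : realType.

Lemma cont_on_subset n (A S : set (vec R n)) g : S `<=` A -> cont_on A g -> cont_on S g.
Proof.
move=> SA gc x Sx e e0; have [del del0 H] := gc x (SA x Sx) e e0.
by exists del => // y Sy dy; apply: H => //; apply: SA.
Qed.

Lemma cont_on_add n (A : set (vec R n)) g h :
  cont_on A g -> cont_on A h -> cont_on A (fun x => g x + h x).
Proof.
move=> gc hc x Ax e e0.
have e20 : 0 < e / 2 by rewrite divr_gt0.
have [d1 d10 H1] := gc x Ax _ e20; have [d2 d20 H2] := hc x Ax _ e20.
exists (Num.min d1 d2); first by rewrite lt_min d10 d20.
move=> y Ay; rewrite lt_min => /andP[y1 y2].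
have := H1 y Ay y1; have := H2 y Ay y2.
have -> : g y + h y - (g x + h x) = (g y - g x) + (h y - h x) by ring.
move=> a b; apply: le_lt_trans (ler_normD _ _) _; lra.
Qed.

Lemma cont_on_scale n (A : set (vec R n)) g c :
  cont_on A g -> cont_on A (fun x => c * g x).
Proof.
move=> gc x Ax e e0.
have c0 : 0 < `|c| + 1 by rewrite ltr_wpDl.
have [del del0 H] := gc x Ax (e / (`|c| + 1)) (divr_gt0 e0 c0).
exists del => // y Ay dy; have := H y Ay dy.
rewrite -mulrBr normrM ltr_pdivlMr // => h.
apply: le_lt_trans h; rewrite mulrDr mulr1 mulrC lerDl //.
Qed.

Lemma cont_on_sub n (A : set (vec R n)) g h :
  cont_on A g -> cont_on A h -> cont_on A (fun x => g x - h x).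
Proof.
move=> gc hc; have -> : (fun x => g x - h x) = (fun x => g x + -1 * h x).
  by apply/funext => x; rewrite mulN1r.
by apply: cont_on_add => //; apply: cont_on_scale.
Qed.

Lemma cont_on_comp n m (A : set (vec R n)) (S : set (vec R m)) (L : vec R m -> vec R n)
  (K : R) g : 0 <= K -> (forall p, S p -> A (L p)) ->
  (forall p q, dist (L p) (L q) <= K * dist p q) ->
  cont_on A g -> cont_on S (fun p => g (L p)).
Proof.
move=> K0 SA Lip gc p Sp e e0.
have [del del0 H] := gc (L p) (SA p Sp) e e0.
have K1 : 0 < K + 1 by rewrite ltr_wpDl.
exists (del / (K + 1)); first by rewrite divr_gt0.
move=> q Sq dq; apply: H; first exact: SA.
apply: le_lt_trans (Lip q p) _.
rewrite ltr_pdivlMr // in dq; apply: le_lt_trans dq.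
have := dist_ge0 q p; nra.
Qed.

Lemma cont_on_enorm n (A : set (vec R n)) : cont_on A (@enorm R n).
Proof.
move=> x _ e e0; exists e => // y _ dy.
by apply: le_lt_trans (enorm_dist_le _ _) dy.
Qed.

Lemma cont_on_sqr n (A : set (vec R n)) g :
  cont_on A g -> cont_on A (fun x => g x ^+ 2).
Proof.
move=> gc x Ax e e0.
set c := 2 * `|g x| + 1.
have c0 : 0 < c by rewrite /c ltr_wpDl // mulr_ge0.
pose e' := Num.min 1 (e / c).
have e'0 : 0 < e' by rewrite lt_min ltr01 divr_gt0.
have [del del0 H] := gc x Ax e' e'0.
exists del => // y Ay dy; have := H y Ay dy => h.
have -> : g y ^+ 2 - g x ^+ 2 = (g y - g x) * (g y - g x + 2 * g x) by ring.
rewrite normrM.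
have h1 : `|g y - g x| < 1 by apply: (lt_le_trans h); rewrite ge_min lexx.
have h2 : `|g y - g x| < e / c by apply: (lt_le_trans h); rewrite ge_min lexx orbT.
have h3 : `|g y - g x + 2 * g x| <= c.
  apply: le_trans (ler_normD _ _) _; rewrite normrM ger0_norm // /c; lra.
apply: (@le_lt_trans _ _ (`|g y - g x| * c)); first by rewrite ler_wpM2l.
by rewrite -ltr_pdivlMr.
Qed.

Lemma cont_on_sqnorm n (A : set (vec R n)) : cont_on A (@sqnorm R n).
Proof.
have -> : @sqnorm R n = (fun x => enorm x ^+ 2) by apply/funext => x; rewrite enorm_sqr.
exact/cont_on_sqr/cont_on_enorm.
Qed.

Lemma cont_on_dot n (A : set (vec R n)) c : cont_on A (dot c).
Proof.
move=> x _ e e0.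
have c0 : 0 < enorm c + 1 by rewrite ltr_wpDl ?enorm_ge0.
exists (e / (enorm c + 1)); first by rewrite divr_gt0.
move=> y _ dy; rewrite dot_sub; apply: le_lt_trans (dot_abs_le _ _) _.
rewrite ltr_pdivlMr // in dy; apply: le_lt_trans dy.
rewrite /dist; have := enorm_ge0 c; have := enorm_ge0 (vsub y x); nra.
Qed.

Lemma cont_on_sum_coord n (A : set (vec R n)) : cont_on A (fun x => \sum_(i < n) x i).
Proof.
have -> : (fun x : vec R n => \sum_(i < n) x i) = dot (fun=> 1).
  by apply/funext => x; apply: eq_bigr => i _; rewrite mul1r.
exact: cont_on_dot.
Qed.

Lemma cont_on_of_unif n (A : set (vec R n)) g :
  (forall eta : R, 0 < eta -> exists2 del : R, 0 < del &
     forall x y, A x -> A y -> dist x y < del -> `|g x - g y| < eta) -> cont_on A g.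
Proof. by move=> gu x Ax e e0; have [del del0 H] := gu e e0; exists del => // y Ay; apply: H. Qed.

Lemma cont_on_abs n (A : set (vec R n)) g : cont_on A g -> cont_on A (fun x => `|g x|).
Proof.
move=> gc x Ax e e0; have [del del0 H] := gc x Ax e e0.
exists del => // y Ay dy; apply: le_lt_trans (H y Ay dy).
exact: ler_dist_dist.
Qed.

Lemma clos_superlevel n (Z eta : R) (h : vec R n -> R) : cont_on (box Z) h ->
  forall p, clos [set p | box Z p /\ eta <= h p] p -> box Z p /\ eta <= h p.
Proof.
move=> hc p clp; have bp : box Z p by apply: clos_sub_box clp => q [].
split => //; apply/ler_addgt0Pr => r r0.
have [del del0 H] := hc p bp r r0; have [q [[bq hq] dq]] := clp del del0.
by have := H q bq dq; rewrite ltr_norml => /andP[_ h2]; lra.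
Qed.

End Continuity.

Section Pairs.
Variables (R : realType) (d : nat).

Definition pfst (p : vec R (d + d)) : vec R d := fun i => p (lshift d i).
Definition psnd (p : vec R (d + d)) : vec R d := fun i => p (rshift d i).
Definition pjoin (x y : vec R d) : vec R (d + d) :=
  fun k => match split k with inl i => x i | inr j => y j end.

Lemma pfst_join x y : pfst (pjoin x y) = x.
Proof.
apply/funext => i; rewrite /pfst /pjoin.
by have /= -> := unsplitK (inl i : 'I_d + 'I_d).
Qed.

Lemma psnd_join x y : psnd (pjoin x y) = y.
Proof.
apply/funext => i; rewrite /psnd /pjoin.
by have /= -> := unsplitK (inr i : 'I_d + 'I_d).
Qed.

Lemma sqnorm_split p : sqnorm p = sqnorm (pfst p) + sqnorm (psnd p).
Proof. by rewrite /sqnorm big_split_ord. Qed.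

Lemma dist_pfst p q : dist (pfst p) (pfst q) <= dist p q.
Proof.
rewrite /dist !enormE ler_sqrt ?sqnorm_ge0 // (sqnorm_split (vsub p q)).
have -> : sqnorm (pfst (vsub p q)) = sqnorm (vsub (pfst p) (pfst q)) by [].
by rewrite lerDl sqnorm_ge0.
Qed.

Lemma dist_psnd p q : dist (psnd p) (psnd q) <= dist p q.
Proof.
rewrite /dist !enormE ler_sqrt ?sqnorm_ge0 // (sqnorm_split (vsub p q)).
have -> : sqnorm (psnd (vsub p q)) = sqnorm (vsub (psnd p) (psnd q)) by [].
by rewrite lerDr sqnorm_ge0.
Qed.

Lemma dist_pdiff p q :
  dist (vsub (pfst p) (psnd p)) (vsub (pfst q) (psnd q)) <= 2 * dist p q.
Proof.
have -> : dist (vsub (pfst p) (psnd p)) (vsub (pfst q) (psnd q)) =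
  enorm (vadd (vsub (pfst p) (pfst q)) (fun i => - (vsub (psnd p) (psnd q)) i)).
  by apply: enorm_ext => i; rewrite /vadd /vsub; ring.
apply: le_trans (enorm_triangle _ _) _.
have -> : enorm (fun i => - (vsub (psnd p) (psnd q)) i) = dist (psnd p) (psnd q).
  by rewrite /dist !enormE /sqnorm; congr Num.sqrt; apply: eq_bigr => i _; ring.
have := dist_pfst p q; have := dist_psnd p q; rewrite /dist; lra.
Qed.

Lemma box_join (Z : R) x y : box Z x -> box Z y -> box Z (pjoin x y).
Proof. by move=> bx by_ k; rewrite /pjoin; case: (split k). Qed.

Lemma box_pfst (Z : R) p : box Z p -> box Z (pfst p).
Proof. by move=> bp i; apply: bp. Qed.

Lemma box_psnd (Z : R) p : box Z p -> box Z (psnd p).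
Proof. by move=> bp i; apply: bp. Qed.

Lemma cont_on_pfst (A : set (vec R d)) (S : set (vec R (d + d))) g :
  (forall p, S p -> A (pfst p)) -> cont_on A g -> cont_on S (fun p => g (pfst p)).
Proof. by move=> SA; apply: (cont_on_comp (K := 1)) => // p q; rewrite mul1r dist_pfst. Qed.

Lemma cont_on_psnd (A : set (vec R d)) (S : set (vec R (d + d))) g :
  (forall p, S p -> A (psnd p)) -> cont_on A g -> cont_on S (fun p => g (psnd p)).
Proof. by move=> SA; apply: (cont_on_comp (K := 1)) => // p q; rewrite mul1r dist_psnd. Qed.

Lemma cont_on_box_unif (u : vec R d -> R) (Z : R) : cont_on (box Z) u ->
  forall eta, 0 < eta -> exists2 del, 0 < del & forall x y, box Z x -> box Z y ->
    dist x y < del -> `|u x - u y| < eta.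
Proof.
move=> uc eta eta0; pose h p := `|u (pfst p) - u (psnd p)|.
have hc : cont_on (box Z) h.
  apply/cont_on_abs/cont_on_sub.
  - by apply: cont_on_pfst uc => p /box_pfst.
  - by apply: cont_on_psnd uc => p /box_psnd.
pose K := [set p | box Z p /\ eta <= h p].
have inK x y : box Z x -> box Z y -> eta <= `|u x - u y| -> K (pjoin x y).
  by move=> bx by_ hxy; split; [apply: box_join | rewrite /h pfst_join psnd_join].
have [[p0 Kp0]|K0] := pselect (K !=set0); last first.
  exists 1 => // x y bx by_ _; rewrite ltNge; apply/negP => hxy.
  by apply: K0; exists (pjoin x y); apply: inK.
have Kb : K `<=` box Z by move=> p [].
(* the pair in [K] of minimal distance gives the modulus *)
have gc : cont_on K (fun p => -1 * enorm (vsub (pfst p) (psnd p))).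
  apply: cont_on_scale.
  apply: (@cont_on_comp _ d (d + d) setT K (fun p => vsub (pfst p) (psnd p)) 2
    (@enorm R d)) => //; [exact: dist_pdiff | exact: cont_on_enorm].
have [c Kc Hc] := cont_on_attains_max (ex_intro _ p0 Kp0) Kb (clos_superlevel hc) gc.
set del := enorm (vsub (pfst c) (psnd c)).
have del0 : 0 < del.
  rewrite lt_def enorm_ge0 andbT; apply/eqP => dc0.
  have e := dist_eq0 dc0; case: Kc => _; rewrite /h.
  have -> : pfst c = psnd c by apply/funext.
  by rewrite subrr normr0 leNgt eta0.
exists del => // x y bx by_ dxy; rewrite ltNge; apply/negP => hxy.
have := Hc _ (inK x y bx by_ hxy); rewrite pfst_join psnd_join.
rewrite -/(dist x y) -/del; lra.
Qed.

End Pairs.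

Section Envelopes.
Variables (R : realType) (d : nat).
Implicit Types (g : vec R d -> R) (x : vec R d).

(* [sup] and [inf] are junk on unbounded sets, hence the bounds on [g] below. *)
Definition ball_image g x (r : R) := [set g y | y in [set y | posorth y /\ dist y x <= r]].

Lemma le_sup_ball_image g x (Lb Gb r : R) : posorth x -> (forall y, posorth y -> Lb <= g y <= Gb) ->
  0 < r -> g x <= sup (ball_image g x r).
Proof.
move=> px gb r0; apply: sup_upper_bound.
  split; first by exists (g x), x => //; split => //; rewrite dist_self ltW.
  by exists Gb => _ [y [py _] <-]; have /andP[] := gb y py.
by exists x => //; split => //; rewrite dist_self ltW.
Qed.

Lemma usc_env_le g x (Lb Gb B r : R) :
  posorth x -> (forall y, posorth y -> Lb <= g y <= Gb) -> 0 < r ->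
  (forall y, posorth y -> dist y x <= r -> g y <= B) -> usc_env g x <= B.
Proof.
move=> px gb r0 HB; rewrite /usc_env.
set E := [set sup _ | r in _].
have hlb : has_lbound E.
  exists Lb => _ [r' r'0 <-]; apply: le_trans (le_sup_ball_image px gb r'0).
  by have /andP[] := gb x px.
apply: le_trans (ge_inf hlb (_ : E (sup (ball_image g x r)))) _.
  by exists r.
apply: ge_sup; first by exists (g x), x => //; split => //; rewrite dist_self ltW.
by move=> _ [y [py dy] <-]; apply: HB.
Qed.

Lemma le_usc_env g x (Lb Gb : R) :
  posorth x -> (forall y, posorth y -> Lb <= g y <= Gb) -> g x <= usc_env g x.
Proof.
move=> px gb; rewrite /usc_env; apply: lb_le_inf.
  by exists (sup (ball_image g x 1)), 1 => //=; rewrite ltr01.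
by move=> _ [r' r'0 <-]; apply: (le_sup_ball_image px gb r'0).
Qed.

End Envelopes.

Section Products.
Variables (R : realType) (n : nat).

Lemma prodr_add_const (b : 'I_n -> R) (c : R) : (0 < n)%N -> (forall i, 0 <= b i) -> 0 <= c ->
  \prod_(i < n) b i + c ^+ n <= \prod_(i < n) (b i + c).
Proof.
move=> n0 b0 c0; rewrite -[n in c ^+ n]card_ord -prodr_const.
have key : forall j s, \prod_(i <- j :: s) b i + \prod_(i <- j :: s) c <=
   \prod_(i <- j :: s) (b i + c).
  move=> j s; elim: s j => [|k s IH] j; first by rewrite !big_cons !big_nil !mulr1.
  rewrite big_cons [X in _ + X]big_cons [X in _ <= X]big_cons.
  have := IH k.
  have B0 : 0 <= \prod_(i <- k :: s) b i by apply: prodr_ge0.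
  have C0 : 0 <= \prod_(i <- k :: s) c by apply: prodr_ge0.
  have := b0 j; nra.

case E : (index_enum _) => [|j s]; last exact: key.
have : Ordinal n0 \in index_enum 'I_n by rewrite mem_index_enum.
by rewrite E.
Qed.

Lemma pareto_subdiff_ge0 (v : vec R n -> R) y p0 :
  pareto_monotone v -> posorth y -> subdiff v y p0 -> forall i, 0 <= p0 i.
Proof.
move=> vm py sd i; rewrite leNgt; apply/negP => pneg.
have e0 : 0 < - p0 i / 2 by rewrite divr_gt0 // oppr_gt0.
have [del del0 H] := sd _ e0.
set t := Num.min (del / 2) (y i / 2).
have t0 : 0 < t by rewrite lt_min !divr_gt0 // py.
have tdel : t < del.
  by apply: (le_lt_trans (min_le_l _ _)); rewrite ltr_pdivrMr // ltr_pMr // ltr1n.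
have tyi : t <= y i / 2 by apply: min_le_r.
pose y' : vec R n := fun j => if j == i then y j - t else y j.
have py' : posorth y'.
  move=> j; rewrite /y'; case: eqP => [->|_]; last exact: py.
  have := py i; lra.
have ds : dist y' y = t.
  rewrite /dist enormE /sqnorm (@sum_single _ _ _ i); last first.
    by move=> j /negPf ji; rewrite /vsub /y' ji subrr expr0n.
  rewrite /vsub /y' eqxx sqrtr_sqr (_ : y i - t - y i = - t); last by ring.
  by rewrite normrN gtr0_norm.
have dt : dot p0 (vsub y' y) = - (t * p0 i).
  rewrite /dot (@sum_single _ _ _ i); last first.
    by move=> j /negPf ji; rewrite /vsub /y' ji subrr mulr0.
  by rewrite /vsub /y' eqxx; ring.
have := H y' py'; rewrite ds dt => /(_ tdel) h1.
have h2 : v y' <= v y.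
  apply: vm; [by move=> j; apply: ltW; apply: py' | by move=> j; apply: ltW; apply: py |].
  by move=> j; rewrite /y'; case: eqP => _ //; lra.
have : 0 < t * (- p0 i / 2) by rewrite mulr_gt0.
move: h1; nra.
Qed.

Lemma subdiff_prod_gap (v : vec R n -> R) (y xh p : vec R n) (ep : R) :
  (0 < n)%N -> 0 < ep -> pareto_monotone v -> posorth y -> dist y xh < ep / 4 ->
  subdiff v y (fun i => p i - ep - 2 * vsub y xh i) ->
  \prod_(i < n) (p i - ep - 2 * vsub y xh i) + (ep / 2) ^+ n <= \prod_(i < n) p i.
Proof.
move=> n0 ep0 vm py dy sd; have q0 := pareto_subdiff_ge0 vm py sd.
apply: le_trans (prodr_add_const n0 q0 _) _; first by rewrite divr_ge0 ?ltW.
apply: ler_prod => i _; apply/andP; split; first by rewrite addr_ge0 ?divr_ge0 ?q0 ?ltW.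
by have := coord_le_dist y xh i; rewrite ler_norml /vsub => /andP[h1 h2]; lra.
Qed.

End Products.

Section Modulus.
Variables (R : realType) (m : R -> R).
Hypothesis mmod : is_modulus m.

Lemma modulus_mono r s : 0 <= r -> r <= s -> m r <= m s.
Proof. by case: mmod => _ _ H _; apply: H. Qed.

Lemma modulus_ge0 r : 0 <= r -> 0 <= m r.
Proof. by case: mmod => _ H _ _; apply: H. Qed.

Lemma modulus_small e : 0 < e -> exists2 rho, 0 < rho & m rho < e.
Proof.
move=> e0; case: mmod => m00 _ _ mc.
have [del del0 H] := mc 0 (lexx 0) e e0.
exists (del / 2); first by rewrite divr_gt0.
have := H (del / 2); rewrite m00 !subr0 ger0_norm ?divr_ge0 ?ltW //.
move=> /(_ isT); rewrite ltr_pdivrMr // ltr_pMr // ltr1n => /(_ isT) h.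
by apply: le_lt_trans h; apply: ler_norm.
Qed.

End Modulus.

Section Cones.
Variables (R : realType) (d : nat).
Implicit Types (K : set (vec R d)) (x c k : vec R d).

Lemma ball_away_from_origin K c (rc : R) : (0 < d)%N -> 0 < rc -> (forall y, dist y c < rc -> K y) ->
  exists k, (forall y, dist y k < rc / 2 -> K y) /\ rc / 2 <= enorm k.
Proof.
move=> d0 rc0 cK; pose e : vec R d := fun j => if j == Ordinal d0 then rc / 2 else 0.
have rc20 : 0 < rc / 2 by rewrite divr_gt0.
have ne : enorm e = rc / 2.
  rewrite enormE /sqnorm (@sum_single _ _ _ (Ordinal d0)); last first.
    by move=> j /negPf ji; rewrite /e ji expr0n.
  by rewrite /e eqxx sqrtr_sqr gtr0_norm.
have half_ball k : dist k c = rc / 2 -> forall y, dist y k < rc / 2 -> K y.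
  move=> dk y dy; apply: cK; apply: (le_lt_trans (dist_triangle y k c)).
  rewrite dk; lra.
pose kp := vadd c e; pose km := vsub c e.
have dkp : dist kp c = rc / 2.
  by rewrite -ne; apply: enorm_ext => i; rewrite /vsub /kp /vadd; ring.
have dkm : dist km c = rc / 2.
  rewrite -ne /dist !enormE /sqnorm; congr Num.sqrt; apply: eq_bigr => i _.
  by rewrite /km /vsub /=; ring.
(* kp and km are rc apart, so one of them has norm at least rc / 2 *)
have hs : rc <= enorm kp + enorm km.
  apply: le_trans (dist_le_norms kp km).
  have -> : dist kp km = enorm (vscale 2 e).
    by apply: enorm_ext => i; rewrite /kp /km /vsub /vadd /vscale /=; ring.
  by rewrite enorm_scale ne ger0_norm //; lra.
have [h|h] := leP (rc / 2) (enorm kp).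
  by exists kp; split => //; apply: half_ball.
by exists km; split; [apply: half_ball | lra].
Qed.

Lemma cone_near_ray K k x (r al : R) : is_cone K -> (forall y, dist y k < r -> K y) -> 0 < al ->
  enorm (vsub x (vscale al k)) < al * r -> K x.
Proof.
move=> Kc kK al0 hx.
have -> : x = vscale al (vadd k (vscale al^-1 (vsub x (vscale al k)))).
  by apply/funext => i; rewrite /vscale /vadd /vsub; field; rewrite gt_eqF.
apply: Kc; last exact: ltW.
apply: kK.
have -> : dist (vadd k (vscale al^-1 (vsub x (vscale al k)))) k =
          enorm (vscale al^-1 (vsub x (vscale al k))).
  by apply: enorm_ext => i; rewrite /vsub /vadd; ring.
by rewrite enorm_scale ger0_norm ?invr_ge0 ?ltW // mulrC ltr_pdivrMr // mulrC.
Qed.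

End Cones.

Section Source.
Variables (R : realType) (d : nat) (Om : set (vec R d)) (f : vec R d -> R) (m : R -> R).
Hypotheses (Oopen : is_open Om) (Obdd : is_bounded Om) (Opos : Om `<=` posorth (d := d))
  (f0 : forall x, posorth x -> 0 <= f x) (mmod : is_modulus m)
  (fm : forall x y, Om x -> Om y -> `|f x - f y| <= m (dist x y))
  (fout : forall x, posorth x -> ~ Om x -> f x = 0).

Lemma f_bounded : exists Fb, forall y, posorth y -> 0 <= f y <= Fb.
Proof.
case: Obdd => M HM.
have [[w0 Ow0]|O0] := pselect (Om !=set0); last first.
  exists 0 => y py; rewrite fout ?lexx // => Oy; apply: O0; by exists y.
have M0 : 0 <= M by apply: le_trans (HM _ Ow0); apply: enorm_ge0.
exists (f w0 + m (M + M)) => y py; rewrite f0 //=.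
have fw0 := f0 (Opos Ow0); have mM := modulus_ge0 mmod (addr_ge0 M0 M0).
have [Oy|nOy] := pselect (Om y); last by rewrite fout //; apply: addr_ge0.
have := fm Oy Ow0; rewrite ler_norml => /andP[_ h].
have : m (dist y w0) <= m (M + M).
  apply: (modulus_mono mmod); first exact: dist_ge0.
  apply: le_trans (dist_le_norms _ _) _; apply: lerD; exact: HM.
lra.
Qed.

Lemma usc_f_le x (B r : R) : posorth x -> 0 < r ->
  (forall y, posorth y -> dist y x <= r -> f y <= B) -> usc_env f x <= B.
Proof.
move=> px r0 H; have [Fb HF] := f_bounded.
by apply: (usc_env_le (Lb := 0) (Gb := Fb) px HF r0 H).
Qed.

Lemma lsc_f_ge x (A r : R) : posorth x -> 0 < r ->
  (forall y, posorth y -> dist y x <= r -> A <= f y) -> A <= lsc_env f x.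
Proof.
move=> px r0 H; have [Fb HF] := f_bounded.
rewrite /lsc_env lerNr.
apply: (usc_env_le (Lb := - Fb) (Gb := 0) px _ r0).
  by move=> y py; have /andP[h1 h2] := HF y py; rewrite lerN2 h2 oppr_le0 h1.
by move=> y py dy; rewrite lerN2; apply: H.
Qed.

Lemma usc_fhat_le (z x : vec R d) (B r : R) : posorth x -> 0 < r -> 0 <= B ->
  (forall y, posorth y -> dist y x <= r + r -> f y <= B) -> usc_env (fhat f z) x <= B.
Proof.
move=> px r0 B0 H; have [Fb HF] := f_bounded.
have Hh : forall y, posorth y -> 0 <= fhat f z y <= Fb.
  move=> y py; rewrite /fhat; case: ifP => _; last by have /andP[] := HF y py; lra.
  apply/andP; split.
    apply: le_trans (le_usc_env py HF); by have /andP[] := HF y py.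
  apply: (usc_f_le py ltr01) => y' py' _; by have /andP[] := HF y' py'.
apply: (usc_env_le (Lb := 0) (Gb := Fb) px Hh r0) => y py dy.
rewrite /fhat; case: ifP => _ //.
apply: (usc_f_le py r0) => y' py' dy'; apply: H => //.
apply: le_trans (dist_triangle y' y x) _; exact: lerD.
Qed.

Lemma usc_fhat_le_lsc_in (eps : R) : 0 < eps -> exists2 rho : R, 0 < rho &
  forall z xa ya, posorth xa -> posorth ya -> Om ya -> dist xa ya < rho ->
    usc_env (fhat f z) xa <= lsc_env f ya + eps.
Proof.
move=> eps0; have eps20 : 0 < eps / 2 by rewrite divr_gt0.
have [rm rm0 Hrm] := modulus_small mmod eps20.
exists (rm / 2); first by rewrite divr_gt0.
move=> z xa ya pxa pya Oya dxy.
have f_near y : Om y -> dist y ya <= rm -> `|f y - f ya| <= eps / 2.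
  move=> Oy dy; apply: le_trans (fm Oy Oya) _; apply: le_trans (ltW Hrm).
  exact: modulus_mono (dist_ge0 _ _) dy.
have [r0 r00 Hr0] := Oopen Oya.
have lsc : f ya - eps / 2 <= lsc_env f ya.
  have rr0 : 0 < Num.min (r0 / 2) rm by rewrite lt_min rm0 divr_gt0.
  apply: (lsc_f_ge pya rr0) => y py dy.
  have Oy : Om y.
    apply: Hr0; apply: le_lt_trans dy _; apply: le_lt_trans (min_le_l _ _) _.
    by rewrite ltr_pdivrMr // ltr_pMr // ltr1n.
  have := f_near y Oy (le_trans dy (min_le_r _ _)).
  by rewrite ler_norml => /andP[h _]; lra.
have usc : usc_env (fhat f z) xa <= f ya + eps / 2.
  have rm8 : 0 < rm / 8 by rewrite divr_gt0.
  have B0 : 0 <= f ya + eps / 2 by have := f0 pya; lra.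
  apply: (usc_fhat_le z pxa rm8 B0) => y py dy.
  have [Oy|nOy] := pselect (Om y); last by rewrite fout.
  have dyr : dist y ya <= rm.
    by apply: le_trans (dist_triangle y xa ya) _; lra.
  by have := f_near y Oy dyr; rewrite ler_norml => /andP[_ h]; lra.
lra.
Qed.

Lemma usc_fhat_le_lsc_out z xa ya (r : R) : posorth xa -> posorth ya -> 0 < r ->
  (forall y, dist y xa <= r -> ~ Om y) -> usc_env (fhat f z) xa <= lsc_env f ya.
Proof.
move=> pxa pya r0 Hr; apply: (@le_trans _ _ 0).
  have r20 : 0 < r / 2 by rewrite divr_gt0.
  apply: (usc_fhat_le z pxa r20 (lexx 0)) => y py dy.
  by rewrite fout ?lexx //; apply: Hr; rewrite [r]splitr.
by apply: (lsc_f_ge pya ltr01) => y py _; apply: f0.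
Qed.

End Source.

Section Domain.
Variables (R : realType) (d : nat) (Om : set (vec R d)).
Hypotheses (d2 : (2 <= d)%N) (Oopen : is_open Om) (Ocone : cone_condition Om).

(* The form in which the cone condition is used: near [xh], a point obtained
   from a point outside [Om] by a step of length [al] roughly along [k0] lies
   in the exterior of [Om]. *)
Definition exterior_along (xh k0 : vec R d) (rk l0 : R) : Prop :=
  forall (al : R) (x y : vec R d), 0 < al -> dist x xh < l0 -> dist y xh < l0 -> ~ Om y ->
    enorm (vsub (vsub x y) (vscale al k0)) < al * rk ->
    exists2 r : R, 0 < r & forall y', dist y' x <= r -> ~ Om y'.

Lemma exterior_along_bdry xh : bdry Om xh ->
  exists k0 rk l0, [/\ 0 < rk, 0 < l0 & exterior_along xh k0 rk l0].
Proof.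
move=> /Ocone[K [V [Kc [c [rc rc0 cK] [rV rV0 HV] Hcone]]]].
have [k0 [k0K k0n]] := ball_away_from_origin (ltnW d2) rc0 cK.
exists k0, (rc / 2), rV; split; rewrite ?divr_gt0 //.
move=> al x y al0 dx dy ny ha.
have [cx|ncx] := pselect (clos Om x); last first.
  have [r0 r00 Hr0] := not_clos_dist ncx.
  exists (r0 / 2); first by rewrite divr_gt0.
  by move=> y' dy' Oy'; have := Hr0 _ Oy'; lra.
have Kxy : K (vsub x y) := cone_near_ray Kc k0K al0 ha.
have exy : x = y.
  apply: (Hcone y (HV y dy) ny x) => //; last exact: HV.
  by exists (vsub x y); split => //; apply/funext => i; rewrite /vadd /vsub; ring.
move: ha; rewrite exy.
have -> : enorm (vsub (vsub y y) (vscale al k0)) = al * enorm k0.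
  have -> : enorm (vsub (vsub y y) (vscale al k0)) = enorm (vscale (- al) k0).
    by apply: enorm_ext => i; rewrite /vsub /vscale; ring.
  by rewrite enorm_scale normrN ger0_norm // ltW.
by rewrite ltr_pM2l //; lra.
Qed.

Lemma exterior_along_exists xh :
  exists k0 rk l0, [/\ 0 < rk, 0 < l0 & exterior_along xh k0 rk l0].
Proof.
have [Hb|nb] := pselect (bdry Om xh); first exact: exterior_along_bdry.
have [Oxh|nO] := pselect (Om xh).
  have [r0 r00 Hr0] := Oopen Oxh.
  exists (fun=> 0), 1, r0; split => // al x y _ _ dy ny _.
  by exfalso; apply: ny; apply: Hr0.
have [r0 r00 Hr0] : exists2 r0 : R, 0 < r0 & forall y, Om y -> r0 <= dist y xh.
  by apply: not_clos_dist => cl; apply: nb; split.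
exists (fun=> 0), 1, (r0 / 2); split => //; first by rewrite divr_gt0.
move=> al x y _ dx _ _ _; exists (r0 / 4); first by rewrite divr_gt0.
by move=> y' dy' Oy'; have := Hr0 _ Oy'; have := dist_triangle y' x xh; lra.
Qed.

End Domain.

Section Doubling.
Variables (R : realType) (d : nat) (w v : vec R d -> R) (ep Wu : R) (xh : vec R d).
Hypotheses (w_bdd : forall x, cposorth x -> `|w x| <= Wu)
  (w_unif : forall eta : R, 0 < eta -> exists2 del : R, 0 < del &
     forall x y, cposorth x -> cposorth y -> dist x y < del -> `|w x - w y| < eta)
  (vc : cont_on (@cposorth R d) v) (pxh : posorth xh)
  (xh_max : forall x, cposorth x ->
     w x - v x - ep * \sum_(i < d) x i <= w xh - v xh - ep * \sum_(i < d) xh i).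

Let Zb := \sum_(i < d) `|xh i| + 1.

(* Doubling of variables: the shift [s] points into the cone at [xh], and the last
   term localizes the maximum at [xh]. *)
Definition penalty (N : R) (s x y : vec R d) : R :=
  w x - v y - ep * \sum_(i < d) y i - N * sqnorm (vsub (vsub x y) s) - sqnorm (vsub y xh).

Lemma box_near_xh x : posorth x -> dist x xh < 1 -> box Zb x.
Proof.
move=> px dx i; rewrite ltW ?px //=.
have := coord_le_dist x xh i; rewrite ler_norml => /andP[_ h1].
have := abs_coord_le_sum xh i; have := ler_norm (xh i); rewrite /Zb; lra.
Qed.

Lemma penalty_attains_max N s : exists xa ya, [/\ box Zb xa, box Zb ya &
  forall x y, box Zb x -> box Zb y -> penalty N s x y <= penalty N s xa ya].
Proof.
have Zb0 : 0 <= Zb by rewrite /Zb addr_ge0 ?sumr_ge0.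
have wc : cont_on (@cposorth R d) w := cont_on_of_unif w_unif.
have on_fst g : cont_on (@cposorth R d) g -> cont_on (box Zb) (fun p => g (@pfst R d p)).
  by apply: cont_on_pfst => p /box_pfst /box_cposorth.
have on_snd g : cont_on (@cposorth R d) g -> cont_on (box Zb) (fun p => g (@psnd R d p)).
  by apply: cont_on_psnd => p /box_psnd /box_cposorth.
have Pc : cont_on (box Zb) (fun p => penalty N s (pfst p) (psnd p)).
  apply: cont_on_sub; first apply: cont_on_sub; first apply: cont_on_sub;
    first apply: cont_on_sub.
  - exact: on_fst.
  - exact: on_snd.
  - by apply/cont_on_scale/(on_snd (fun y => \sum_(i < d) y i))/cont_on_sum_coord.
  - apply: cont_on_scale.
    apply: (@cont_on_comp _ d (d + d) setT (box Zb)
      (fun p => vsub (vsub (pfst p) (psnd p)) s) 2) => //; last exact: cont_on_sqnorm.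
    move=> p q; apply: le_trans (dist_pdiff p q).
    by rewrite le_eqVlt; apply/orP; left; apply/eqP; apply: enorm_ext => i; rewrite /vsub; ring.
  - apply: (@cont_on_comp _ d (d + d) setT (box Zb) (fun p => vsub (psnd p) xh) 1) => //;
      last exact: cont_on_sqnorm.
    move=> p q; rewrite mul1r; apply: le_trans (dist_psnd p q).
    by rewrite le_eqVlt; apply/orP; left; apply/eqP; apply: enorm_ext => i; rewrite /vsub; ring.
have [c Bc Hc] := cont_on_box_max Zb0 Pc.
exists (pfst c), (psnd c); split; [exact: box_pfst | exact: box_psnd |].
by move=> x y bx by_; have := Hc _ (box_join bx by_); rewrite pfst_join psnd_join.
Qed.

Lemma penalty_max_gap N s xa ya : cposorth ya ->
  penalty N s (vadd xh s) xh <= penalty N s xa ya ->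
  N * sqnorm (vsub (vsub xa ya) s) + sqnorm (vsub ya xh) <=
    (w xa - w ya) + (w xh - w (vadd xh s)).
Proof.
move=> cya hmax; have := xh_max cya; move: hmax; rewrite /penalty.
rewrite (@sqnorm_zero _ _ (vsub (vsub (vadd xh s) xh) s)); last first.
  by move=> i; rewrite /vsub /vadd; ring.
rewrite (@sqnorm_zero _ _ (vsub xh xh)); last by move=> i; rewrite /vsub subrr.
lra.
Qed.

Lemma penalty_max_superdiff N s xa ya (r : R) : 0 < N -> 0 < r ->
  (forall x, posorth x -> dist x xa < r -> box Zb x) ->
  (forall x, box Zb x -> penalty N s x ya <= penalty N s xa ya) ->
  superdiff w xa (fun i => 2 * N * vsub (vsub xa ya) s i).
Proof.
move=> N0 r0 near hmax eps eps0; set a := vsub (vsub xa ya) s.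
exists (Num.min r (eps / N)); first by rewrite lt_min r0 divr_gt0.
move=> x px; rewrite lt_min => /andP[dx1 dx2].
have := hmax x (near x px dx1); rewrite /penalty.
have -> : sqnorm (vsub (vsub x ya) s) = sqnorm (vadd a (vsub x xa)).
  by apply: sqnorm_ext => i; rewrite /a /vadd /vsub; ring.
rewrite sqnorm_add -dist_sqr.
have -> : dot (fun i => 2 * N * a i) (vsub x xa) = 2 * N * dot a (vsub x xa).
  by rewrite /dot mulr_sumr; apply: eq_bigr => i _; ring.
have hd : N * dist x xa <= eps by rewrite mulrC -ler_pdivlMr // ltW.
have := dist_ge0 x xa; nra.
Qed.

Lemma penalty_max_subdiff N s xa ya (r : R) : 0 < N -> 0 < r ->
  (forall y, posorth y -> dist y ya < r -> box Zb y) ->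
  (forall y, box Zb y -> penalty N s xa y <= penalty N s xa ya) ->
  subdiff v ya (fun i => 2 * N * vsub (vsub xa ya) s i - ep - 2 * vsub ya xh i).
Proof.
move=> N0 r0 near hmax eps eps0; set a := vsub (vsub xa ya) s; set b := vsub ya xh.
have N10 : 0 < N + 1 by rewrite ltr_wpDl // ltW.
exists (Num.min r (eps / (N + 1))); first by rewrite lt_min r0 divr_gt0.
move=> y py; rewrite lt_min => /andP[dy1 dy2].
have := hmax y (near y py dy1); rewrite /penalty.
have -> : sqnorm (vsub (vsub xa y) s) = sqnorm (vsub a (vsub y ya)).
  by apply: sqnorm_ext => i; rewrite /a /vsub; ring.
have -> : sqnorm (vsub y xh) = sqnorm (vadd b (vsub y ya)).
  by apply: sqnorm_ext => i; rewrite /b /vadd /vsub; ring.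
have -> : \sum_(i < d) y i = \sum_(i < d) ya i + \sum_(i < d) vsub y ya i.
  by rewrite -big_split /=; apply: eq_bigr => i _; rewrite /vsub addrC subrK.
rewrite sqnorm_add sqnorm_sub -dist_sqr dot_lin.
have hd : (N + 1) * dist y ya <= eps by rewrite mulrC -ler_pdivlMr // ltW.
have := dist_ge0 y ya; nra.
Qed.

Lemma penalty_max_near (al t : R) (k0 xa ya : vec R d) : 0 < al -> 0 < t ->
  let N := (al ^+ 2)^-1 in let s := vscale al k0 in
  box Zb xa -> box Zb ya -> box Zb (vadd xh s) ->
  (forall x y, box Zb x -> box Zb y -> penalty N s x y <= penalty N s xa ya) ->
  (forall x y, cposorth x -> cposorth y -> dist x y <= al * (4 * Wu + 1 + enorm k0) ->
     `|w x - w y| < t ^+ 2 / 4) ->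
  [/\ dist xa ya <= al * (4 * Wu + 1 + enorm k0), dist ya xh < t &
      enorm (vsub (vsub xa ya) s) < t * al].
Proof.
move=> al0 t0 N s Bxa Bya Bxs Hmax Hw.
set a := vsub (vsub xa ya) s; set b := vsub ya xh.
have N0 : 0 < N by rewrite invr_gt0 exprn_gt0.
have Nal : N * al ^+ 2 = 1 by rewrite mulVf // expf_neq0 // gt_eqF.
have ns : enorm s = al * enorm k0 by rewrite enorm_scale ger0_norm // ltW.
have cxa := box_cposorth Bxa; have cya := box_cposorth Bya.
have cxs := box_cposorth Bxs; have cxh : cposorth xh by move=> i; apply: ltW.
have Wu0 : 0 <= Wu := le_trans (normr_ge0 _) (w_bdd cxh).
have Bxh : box Zb xh by apply: box_near_xh pxh _; rewrite dist_self.
have gap := penalty_max_gap cya (Hmax _ _ Bxs Bxh).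
have := w_bdd cxa; have := w_bdd cya; have := w_bdd cxh; have := w_bdd cxs.
rewrite !ler_norml => /andP[? ?] /andP[? ?] /andP[? ?] /andP[? ?].
have Na0 : 0 <= N * sqnorm a by rewrite mulr_ge0 ?sqnorm_ge0 // ltW.
have ssb0 := sqnorm_ge0 b.
have Na : N * sqnorm a <= 4 * Wu by lra.
have ea : enorm a <= (4 * Wu + 1) * al.
  apply: enorm_le_sqnorm; first by rewrite mulr_ge0 ?ltW // ltr_wpDl // mulr_ge0.
  have := ler_wpM2r (ltW (exprn_gt0 2 al0)) Na; rewrite mulrAC Nal mul1r.
  by rewrite exprMn; have := exprn_gt0 2 al0; nra.
have dxy : dist xa ya <= al * (4 * Wu + 1 + enorm k0).
  have -> : dist xa ya = enorm (vadd a s).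
    by apply: enorm_ext => i; rewrite /a /vadd /vsub; ring.
  by apply: le_trans (enorm_triangle _ _) _; rewrite ns; nra.
have dxs : dist xh (vadd xh s) <= al * (4 * Wu + 1 + enorm k0).
  have -> : dist xh (vadd xh s) = enorm s.
    by rewrite dist_sym; apply: enorm_ext => i; rewrite /vsub /vadd; ring.
  by rewrite ns ler_pM2l // lerDr; nra.
have := Hw _ _ cxa cya dxy; have := Hw _ _ cxh cxs dxs.
rewrite !ltr_norml => /andP[? ?] /andP[? ?].
have T : N * sqnorm a + sqnorm b < t ^+ 2 by lra.
split => //; first by apply: enorm_lt_sqnorm => //; lra.
apply: enorm_lt_sqnorm; first by rewrite mulr_gt0.
have h : N * sqnorm a * al ^+ 2 < t ^+ 2 * al ^+ 2 by rewrite ltr_pM2r ?exprn_gt0 //; lra.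
by rewrite exprMn; move: h; rewrite mulrAC Nal mul1r.
Qed.

Lemma doubling (k0 : vec R d) (tau : R) : 0 < tau ->
  exists al xa ya p, [/\ 0 < al, posorth xa /\ posorth ya,
    dist xa xh < tau /\ dist ya xh < tau,
    enorm (vsub (vsub xa ya) (vscale al k0)) < tau * al &
    superdiff w xa p /\ subdiff v ya (fun i => p i - ep - 2 * vsub ya xh i)].
Proof.
move=> tau0; have [lx lx0 Hlx] := posorth_coord_lb pxh.
pose t := Num.min (Num.min tau lx) (1 / 2) / 2.
have t0 : 0 < t by rewrite divr_gt0 // !lt_min tau0 lx0 divr_gt0.
have [ttau tlx thalf] : [/\ t + t <= tau, t + t <= lx & t + t <= 1 / 2].
  by rewrite /t -splitr; split; rewrite !ge_min lexx ?orbT.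
have [du du0 Hdu] := w_unif (divr_gt0 (exprn_gt0 2 t0) (ltr0Sn _ 3)).
pose m := Num.min du t; pose C := 4 * Wu + 1 + enorm k0.
have m0 : 0 < m by rewrite lt_min du0 t0.
have Wu0 : 0 <= Wu := le_trans (normr_ge0 _) (w_bdd (fun i => ltW (pxh i))).
have C0 : 0 < C by rewrite /C ltr_wpDr ?enorm_ge0 // ltr_wpDl // mulr_ge0.
pose al := m / (C + 1).
have al0 : 0 < al by rewrite divr_gt0 // ltr_wpDl // ltW.
have alC : al * C < m by rewrite /al mulrC mulrA ltr_pdivrMr ?ltr_wpDl ?ltW //; nra.
have [mdu mt] : m <= du /\ m <= t by split; rewrite ge_min lexx ?orbT.
have dxs : dist (vadd xh (vscale al k0)) xh < t.
  have -> : dist (vadd xh (vscale al k0)) xh = enorm (vscale al k0).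
    by apply: enorm_ext => i; rewrite /vsub /vadd; ring.
  rewrite enorm_scale ger0_norm ?ltW //.
  by apply: le_lt_trans (lt_le_trans alC mt); rewrite ler_pM2l // /C lerDr; nra.
have Bxs : box Zb (vadd xh (vscale al k0)).
  by apply: box_near_xh; [apply: posorth_ball Hlx _ | ]; lra.
have [xa [ya [Bxa Bya Hmax]]] := penalty_attains_max (al ^+ 2)^-1 (vscale al k0).
have [dxy dya ea] : [/\ dist xa ya <= al * C, dist ya xh < t &
    enorm (vsub (vsub xa ya) (vscale al k0)) < t * al].
  apply: penalty_max_near => // x y cx cy; rewrite -/C => dxy; apply: Hdu => //; lra.
have dxa : dist xa xh < t + t by have := dist_triangle xa ya xh; lra.
have pxa : posorth xa by apply: posorth_ball Hlx _; lra.
have pya : posorth ya by apply: posorth_ball Hlx _; lra.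
have N0 : 0 < (al ^+ 2)^-1 by rewrite invr_gt0 exprn_gt0.
have r0 : 0 < 1 / 4 :> R by rewrite divr_gt0.
exists al, xa, ya, (fun i => 2 * (al ^+ 2)^-1 * vsub (vsub xa ya) (vscale al k0) i).
split => //; first (split; lra).
  by apply: lt_le_trans ea _; rewrite ler_pM2r //; lra.
split.
  apply: (penalty_max_superdiff N0 r0) => [x px dx|x bx]; last exact: Hmax.
  by apply: box_near_xh px _; have := dist_triangle x xa xh; lra.
apply: (penalty_max_subdiff N0 r0) => [y py dy|y by_]; last exact: Hmax.
by apply: box_near_xh py _; have := dist_triangle y ya xh; lra.
Qed.

End Doubling.

Definition trunc (R : realType) (d : nat) (u : vec R d -> R) (Z : R) : vec R d -> R :=
  fun x => u (vmin x (fun=> Z)).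

Lemma box_vmin (R : realType) (d : nat) (Z : R) (x : vec R d) :
  0 <= Z -> cposorth x -> box Z (vmin x (fun=> Z)).
Proof. by move=> Z0 cx i; rewrite /vmin le_min cx Z0 /= ge_min lexx orbT. Qed.

Section Truncation.
Variables (R : realType) (d : nat) (u : vec R d -> R) (Z : R).
Hypotheses (uc : cont_on (@cposorth R d) u) (Z0 : 0 < Z).

Lemma trunc_unif_cont (eta : R) : 0 < eta -> exists2 del : R, 0 < del &
  forall x y, cposorth x -> cposorth y -> dist x y < del -> `|trunc u Z x - trunc u Z y| < eta.
Proof.
move=> eta0; have [del del0 H] := cont_on_box_unif (cont_on_subset (@box_cposorth R d Z) uc) eta0.
exists del => // x y cx cy dxy; apply: H; try exact: box_vmin (ltW Z0) _.
exact: le_lt_trans (dist_vmin _ _ _) dxy.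
Qed.

Lemma trunc_bounded : exists Wu, forall x, cposorth x -> `|trunc u Z x| <= Wu.
Proof.
have [c _ Hc] := cont_on_box_max (ltW Z0)
  (cont_on_abs (cont_on_subset (@box_cposorth R d Z) uc)).
by exists `|u c| => x cx; apply/Hc/box_vmin => //; apply: ltW.
Qed.

End Truncation.

Section PerturbedMax.
Variables (R : realType) (d : nat) (u v : vec R d -> R).
Hypotheses (uc : cont_on (@cposorth R d) u) (vc : cont_on (@cposorth R d) v)
  (vmon : pareto_monotone v) (bd : forall x, bdposorth x -> u x <= v x).

Lemma perturbed_max (x0 : vec R d) (Z ep : R) : 0 < Z -> 0 < ep -> posorth x0 -> box Z x0 ->
  ep * \sum_(i < d) x0 i < u x0 - v x0 ->
  exists2 xh, posorth xh & forall x, cposorth x ->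
    trunc u Z x - v x - ep * \sum_(i < d) x i <=
    trunc u Z xh - v xh - ep * \sum_(i < d) xh i.
Proof.
move=> Z0 ep0 px0 bx0 gx0; pose z : vec R d := fun=> Z.
pose g x := trunc u Z x - v x - ep * \sum_(i < d) x i.
have gc : cont_on (box Z) g.
  rewrite /g; apply: cont_on_sub; first apply: cont_on_sub.
  - exact: cont_on_subset (@box_cposorth R d Z) (cont_on_of_unif (trunc_unif_cont uc Z0)).
  - exact: cont_on_subset (@box_cposorth R d Z) vc.
  - exact/cont_on_scale/cont_on_sum_coord.
have [xh Bxh Hxh] := cont_on_box_max (ltW Z0) gc.
have vmin_le x : vle (vmin x z) x by move=> i; rewrite /vmin ge_min lexx.
(* the maximum over the box is global: truncating at [z] can only increase [g] *)
have g_vmin x : cposorth x -> g x <= g (vmin x z).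
  move=> cx; have cxz := box_cposorth (box_vmin (ltW Z0) cx); rewrite /g.
  have -> : trunc u Z (vmin x z) = trunc u Z x.
    by rewrite /trunc; congr u; apply/funext => i; rewrite /vmin -minA minxx.
  have := vmon cxz cx (vmin_le x).
  have : \sum_(i < d) vmin x z i <= \sum_(i < d) x i by apply: ler_sum => i _; apply: vmin_le.
  nra.
have g_le x : cposorth x -> g x <= g xh.
  by move=> cx; apply: le_trans (g_vmin x cx) (Hxh _ (box_vmin (ltW Z0) cx)).
have gx0_pos : 0 < g x0.
  rewrite /g; have -> : trunc u Z x0 = u x0.
    by rewrite /trunc; congr u; apply/funext => i; apply/min_idPl; have /andP[] := bx0 i.
  lra.
exists xh => //; have cxh := box_cposorth Bxh.
move=> i; rewrite lt_def (cxh i) andbT; apply/negP => /eqP xi0.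
have bdm : bdposorth (vmin xh z).
  split; first exact: box_cposorth (box_vmin (ltW Z0) cxh).
  by exists i; rewrite /vmin xi0; apply/min_idPl; apply: ltW.
have := bd bdm; have := vmon (box_cposorth (box_vmin (ltW Z0) cxh)) cxh (vmin_le xh).
have : 0 <= \sum_(i < d) xh i by apply: sumr_ge0 => j _; apply: cxh.
have := lt_le_trans gx0_pos (g_le _ (fun j => ltW (px0 j))).
by rewrite /g /trunc; nra.
Qed.

Lemma exists_perturbed_max (x0 : vec R d) : posorth x0 -> v x0 < u x0 ->
  exists Z ep xh, [/\ 0 < Z, 0 < ep, posorth xh & forall x, cposorth x ->
    trunc u Z x - v x - ep * \sum_(i < d) x i <=
    trunc u Z xh - v xh - ep * \sum_(i < d) xh i].
Proof.
move=> px0 vu; pose S := \sum_(i < d) x0 i; pose Z := \sum_(i < d) `|x0 i| + 1.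
pose ep := (u x0 - v x0) / (S + 1).
have S0 : 0 <= S by apply: sumr_ge0 => i _; apply: ltW.
have ep0 : 0 < ep by rewrite divr_gt0 ?subr_gt0 // ltr_wpDl.
have Z0 : 0 < Z by rewrite ltr_wpDl // sumr_ge0.
have bx0 : box Z x0.
  move=> i; rewrite ltW //=; have := abs_coord_le_sum x0 i.
  by have := ler_norm (x0 i); rewrite /Z; lra.
have gx0 : ep * S < u x0 - v x0 by rewrite /ep mulrAC ltr_pdivrMr ?ltr_wpDl //; nra.
have [xh pxh xh_max] := perturbed_max Z0 ep0 px0 bx0 gx0.
by exists Z, ep, xh.
Qed.

End PerturbedMax.

Theorem theorem2p10 (R : realType) (d : nat) (Om : set (vec R d))
    (f : vec R d -> R) (m : R -> R) (u v : vec R d -> R) :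
  (2 <= d)%N ->
  is_open Om -> is_bounded Om -> Om `<=` posorth (d := d) ->
  cone_condition Om ->
  (forall x, posorth x -> 0 <= f x) ->
  is_modulus m ->
  (forall x y, Om x -> Om y -> `|f x - f y| <= m (dist x y)) ->
  (forall x, posorth x -> ~ Om x -> f x = 0) ->
  cont_on (cposorth (d := d)) u -> cont_on (cposorth (d := d)) v ->
  visc_sub f u -> visc_super f v ->
  truncatable f u -> pareto_monotone v ->
  (forall x, bdposorth x -> u x <= v x) ->
  forall x, posorth x -> u x <= v x.
Proof.
move=> d2 Oopen Obdd Opos Ocone f0 mmod fm fout uc vc _ vsup utr vmon bd x0 px0.
rewrite leNgt; apply/negP => vu.
have [Z [ep [xh [Z0 ep0 pxh xh_max]]]] := exists_perturbed_max uc vc vmon bd px0 vu.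
have [Wu w_bdd] := trunc_bounded uc Z0.
have [k0 [rk [l0 [rk0 l00 ext]]]] := exterior_along_exists d2 Oopen Ocone xh.
have delta0 : 0 < (ep / 2) ^+ d by rewrite exprn_gt0 // divr_gt0.
have [rho rho0 near_in] :=
  usc_fhat_le_lsc_in Oopen Obdd Opos f0 mmod fm fout (divr_gt0 delta0 (ltr0Sn _ 1)).
pose tau := Num.min (Num.min (ep / 4) rk) (Num.min l0 (rho / 2)).
have tau0 : 0 < tau.
  have ep4 : 0 < ep / 4 by rewrite divr_gt0.
  by rewrite !lt_min ep4 rk0 l00 divr_gt0.
have [tep trk tl0 trho] : [/\ tau <= ep / 4, tau <= rk, tau <= l0 & tau <= rho / 2].
  by split; rewrite !ge_min lexx ?orbT.
have [al [xa [ya [p [al0 [pxa pya] [dxa dya] ea [sup sub]]]]]] :=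
  doubling w_bdd (trunc_unif_cont uc Z0) vc pxh xh_max k0 tau0.
have gap : lsc_env f ya + (ep / 2) ^+ d <= usc_env (fhat f (fun=> Z)) xa.
  have := utr (fun=> Z) (fun=> Z0) xa p pxa sup; have := vsup ya _ pya sub.
  by have := subdiff_prod_gap (ltnW d2) ep0 vmon pya (lt_le_trans dya tep) sub; lra.
have [Oya|nOya] := pselect (Om ya).
  have dxy : dist xa ya < rho by have := dist_triangle xa xh ya; rewrite (dist_sym xh); lra.
  by have := near_in (fun=> Z) xa ya pxa pya Oya dxy; lra.
have ea' : enorm (vsub (vsub xa ya) (vscale al k0)) < al * rk.
  by apply: lt_le_trans ea _; rewrite mulrC ler_pM2l.
have [r r0 Hr] := ext al xa ya al0 (lt_le_trans dxa tl0) (lt_le_trans dya tl0) nOya ea'.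
by have := usc_fhat_le_lsc_out Obdd Opos f0 mmod fm fout (fun=> Z) pxa pya r0 Hr; lra.
Qed.
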